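(* Let $s\in\mathbb N$, $R,p,\beta>0$, and let $\mathcal G$ be an $s$-uniform hypergraph. If $\mathcal G[W]$ is $(p,R)$-Janson for every $W\subset V(\mathcal G)$ with $|W|\ge(1-\beta)v(\mathcal G)$, then there exists $\mu:\mathcal G\to\mathbb R_{\ge0}$ with $$e(\mu)=\sqrt R,\qquad\Lambda_p(\mu)<\frac{e(\mu)^2}{R}\qquad\text{and}\qquad\sum_{v\in V(\mathcal G)}d_\mu(v)^2\le\frac{2s^2e(\mu)^2}{\beta\,v(\mathcal G)}.$$
   Context: A hypergraph is identified with its edge set; $v(\mathcal G)=|V(\mathcal G)|$; $\mathcal G[W]=\{E\in\mathcal G:E\subset W\}$. For $\nu:\mathcal G\to\mathbb R_{\ge0}$: $e(\nu)=\sum_E\nu(E)$, $d_\nu(L)=\sum_{E\in\mathcal G,L\subset E}\nu(E)$ (with $d_\nu(v)=d_\nu(\{v\})$), $\Lambda_p(\nu)=\sum_{L\subset V(\mathcal G),|L|\ge2}d_\nu(L)^2p^{-|L|}$. $\mathcal G$ is $(p,R)$-Janson if some $\nu:\mathcal G\to\mathbb R_{\ge0}$ has $\Lambda_p(\nu)<e(\nu)^2/R$. *)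

(* Hypergraph on vertex type T : finType (V(G) = T),
   identified with its edge set G : {set {set T}}. *)
From mathcomp Require Import all_boot all_order all_algebra.
From mathcomp Require Import reals.
Set Implicit Arguments. Unset Strict Implicit. Unset Printing Implicit Defensive.
Import Order.TTheory GRing.Theory Num.Theory.
Local Open Scope ring_scope.

Section Hyper.
Variables (K : realType) (T : finType).

Definition induced (G : {set {set T}}) (W : {set T}) : {set {set T}} :=
  [set E in G | E \subset W].

Definition uniform (s : nat) (G : {set {set T}}) : Prop :=
  forall E, E \in G -> #|E| = s.

(* nu : G -> R_{>=0} (values outside G are irrelevant) *)
Definition nonneg_weight (G : {set {set T}}) (nu : {set T} -> K) : Prop :=
  forall E, E \in G -> 0 <= nu E.

Definition ew (G : {set {set T}}) (nu : {set T} -> K) : K :=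
  \sum_(E in G) nu E.

Definition deg (G : {set {set T}}) (nu : {set T} -> K) (L : {set T}) : K :=
  \sum_(E in G | L \subset E) nu E.

Definition Lambda (p : K) (G : {set {set T}}) (nu : {set T} -> K) : K :=
  \sum_(L : {set T} | (1 < #|L|)%N) (deg G nu L) ^+ 2 * p ^- #|L|.

Definition janson (p R : K) (G : {set {set T}}) : Prop :=
  exists nu : {set T} -> K,
    nonneg_weight G nu /\ Lambda p G nu < (ew G nu) ^+ 2 / R.

End Hyper.

From mathcomp Require Import all_boot all_order all_algebra.
From mathcomp Require Import reals.
From mathcomp Require Import ring lra.
Set Implicit Arguments. Unset Strict Implicit. Unset Printing Implicit Defensive.
Import Order.TTheory GRing.Theory Num.Theory.
Local Open Scope ring_scope.

(* Normalise Janson weights to total weight 1, so that Lambda < 1/R, and look at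
   the degree energy Q(x) = sum_v d_x(v)^2, which is at most s.  If Q(x) > 2B with
   B = s^2/(beta n), Markov's inequality shows that the vertices of degree at most
   s/(beta n) form a set W with |W| >= (1 - beta) n.  A unit Janson weight nu of
   G[W] then has cross term sum_v d_x(v) d_nu(v) <= B, so moving from x towards nu
   by t = Q(x)/(2s) keeps Lambda < 1/R (Lambda is convex) and lowers Q by at least
   B^2/s.  Finitely many steps reach Q <= 2B; scaling by sqrt R gives mu. *)

Lemma card_le_markov (R : realFieldType) (T : finType) (f : T -> R) (c : R) :
  0 < c -> (forall v, 0 <= f v) ->
  #|T|%:R - (\sum_v f v) / c <= #|[set v | f v <= c]|%:R.
Proof.
move=> c_gt0 f_ge0; set A := [set v | f v <= c].
have : #|~: A|%:R * c <= \sum_v f v.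
  rewrite mulr_natl -sumr_const [X in _ <= X](bigID (fun v => v \in ~: A)) /=.
  rewrite -[X in X <= _]addr0 lerD ?sumr_ge0 //.
  by apply: ler_sum => v; rewrite !inE -ltNge => /ltW.
rewrite -ler_pdivlMr // -(cardsC A) natrD; lra.
Qed.

Lemma mix_quadratic_le (R : realFieldType) (s q t B C Q : R) :
  0 < s -> q = 2 * t * s -> 0 <= B -> 2 * B < q -> q <= s -> C <= B -> Q <= s ->
  (1 - t) ^+ 2 * q + 2 * (1 - t) * t * C + t ^+ 2 * Q <= q - B ^+ 2 / s.
Proof.
move=> s_gt0 qE B_ge0 Bq qs CB Qs.
have t_gt0 : 0 < t by nra.
have t_le : t <= 1/2 by nra.
have tt_ge0 : 0 <= (1 - t) * t by apply: mulr_ge0; lra.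
have cross_le : 2 * (1 - t) * t * C <= (1 - t) * t * q by nra.
have Q_le : t ^+ 2 * Q <= t * q / 2 by nra.
have B_le : B ^+ 2 <= t * q / 2 * s by nra.
suff : B ^+ 2 / s <= t * q / 2 by nra.
by rewrite ler_pdivrMr.
Qed.

Lemma archi_descent (R : archiRealFieldType) (X : Type) (P : X -> Prop)
    (f : X -> R) (b d : R) :
  0 < d -> (forall x, P x -> b < f x -> exists2 y, P y & f y <= f x - d) ->
  forall x, P x -> exists2 y, P y & f y <= b.
Proof.
move=> d_gt0 step x Px.
have [k fx_le] : exists k : nat, f x <= b + k%:R * d.
  have := le_lt_trans (ler_norm _) (archi_boundP (normr_ge0 ((f x - b) / d))).
  rewrite ltr_pdivrMr // => fx_lt.
  by exists (Num.bound `|(f x - b) / d|); lra.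
elim: k x Px fx_le => [|k IHk] x Px fx_le.
  by exists x; rewrite mul0r addr0 in fx_le.
have [fx_le_b|b_lt_fx] := lerP (f x) b; first by exists x.
have [y Py fy_le] := step x Px b_lt_fx.
apply: (IHk y Py); rewrite -natr1 mulrDl mul1r in fx_le; lra.
Qed.

Section Weights.
Variables (K : realType) (T : finType) (G : {set {set T}}).
Implicit Types (x y : {set T} -> K) (L : {set T}).

Lemma deg_lincomb (a b : K) x y L :
  deg G (fun E => a * x E + b * y E) L = a * deg G x L + b * deg G y L.
Proof. by rewrite /deg big_split /= -!mulr_sumr. Qed.

Lemma ew_lincomb (a b : K) x y :
  ew G (fun E => a * x E + b * y E) = a * ew G x + b * ew G y.
Proof. by rewrite /ew big_split /= -!mulr_sumr. Qed.

Lemma deg_scale (a : K) x L : deg G (fun E => a * x E) L = a * deg G x L.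
Proof. by rewrite /deg -mulr_sumr. Qed.

Lemma ew_scale (a : K) x : ew G (fun E => a * x E) = a * ew G x.
Proof. by rewrite /ew -mulr_sumr. Qed.

Lemma deg_ge0 x L : nonneg_weight G x -> 0 <= deg G x L.
Proof. by move=> x_ge0; apply: sumr_ge0 => E /andP[/x_ge0]. Qed.

Lemma deg_le_ew x L : nonneg_weight G x -> deg G x L <= ew G x.
Proof.
move=> x_ge0; rewrite /deg /ew big_mkcondr /=; apply: ler_sum => E /x_ge0.
by case: ifP.
Qed.

Lemma sum_deg_set1 s x : uniform s G ->
  \sum_(v : T) deg G x [set v] = s%:R * ew G x.
Proof.
move=> uG; rewrite /deg /ew.
under eq_bigr => v _ do rewrite big_mkcondr /=.
rewrite exchange_big /= mulr_sumr; apply: eq_bigr => E GE.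
rewrite -big_mkcond /=.
under eq_bigl => v do rewrite sub1set.
by rewrite sumr_const uG // mulr_natl.
Qed.

Definition deg_energy x : K := \sum_(v : T) deg G x [set v] ^+ 2.

Lemma deg_energy_ge0 x : 0 <= deg_energy x.
Proof. by apply: sumr_ge0 => v _; apply: sqr_ge0. Qed.

Lemma deg_energy_le s x : uniform s G -> nonneg_weight G x ->
  deg_energy x <= s%:R * ew G x ^+ 2.
Proof.
move=> uG x_ge0; rewrite expr2 mulrA mulrAC -(sum_deg_set1 x uG) mulr_suml.
apply: ler_sum => v _; rewrite expr2 ler_wpM2l ?deg_ge0 //.
exact: deg_le_ew.
Qed.

Lemma deg_energy_lincomb (a b : K) x y :
  deg_energy (fun E => a * x E + b * y E) =
  a ^+ 2 * deg_energy x + 2 * a * b * \sum_(v : T) deg G x [set v] * deg G y [set v]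
  + b ^+ 2 * deg_energy y.
Proof.
rewrite /deg_energy !mulr_sumr -!big_split /=; apply: eq_bigr => v _.
by rewrite deg_lincomb; ring.
Qed.

Variable p : K.
Hypothesis p_gt0 : 0 < p.

Lemma Lambda_ge0 x : 0 <= Lambda p G x.
Proof.
apply: sumr_ge0 => L _; apply: mulr_ge0; first exact: sqr_ge0.
by rewrite invr_ge0 exprn_ge0 // ltW.
Qed.

Lemma Lambda_scale (a : K) x : Lambda p G (fun E => a * x E) = a ^+ 2 * Lambda p G x.
Proof.
rewrite /Lambda mulr_sumr; apply: eq_bigr => L _.
by rewrite deg_scale exprMn mulrA.
Qed.

Lemma Lambda_convex (t : K) x y : 0 <= t <= 1 ->
  Lambda p G (fun E => (1 - t) * x E + t * y E)
   <= (1 - t) * Lambda p G x + t * Lambda p G y.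
Proof.
move=> /andP[t_ge0 t_le1].
rewrite /Lambda !mulr_sumr -big_split /=; apply: ler_sum => L _.
rewrite deg_lincomb.
set a := deg G x L; set b := deg G y L; set c := p ^- #|L|.
have c_ge0 : 0 <= c by rewrite /c invr_ge0 exprn_ge0 // ltW.
have -> : (1 - t) * (a ^+ 2 * c) + t * (b ^+ 2 * c)
   = ((1 - t) * a + t * b) ^+ 2 * c + t * (1 - t) * (a - b) ^+ 2 * c by ring.
rewrite lerDl; apply: mulr_ge0 => //; apply: mulr_ge0; last exact: sqr_ge0.
by apply: mulr_ge0 => //; rewrite subr_ge0.
Qed.

End Weights.

Definition unit_janson_weight (K : realType) (T : finType) (p R : K)
    (G : {set {set T}}) (x : {set T} -> K) :=
  [/\ nonneg_weight G x, ew G x = 1 & Lambda p G x < R^-1].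

Lemma janson_unit_weight (K : realType) (T : finType) (p R : K) (G : {set {set T}}) :
  0 < p -> 0 < R -> janson p R G -> exists x, unit_janson_weight p R G x.
Proof.
move=> p_gt0 R_gt0 [nu [nu_ge0 Lnu_lt]].
set e := ew G nu in Lnu_lt.
have e_ge0 : 0 <= e by apply: sumr_ge0 => E /nu_ge0.
have e_neq0 : e != 0.
  apply: contraTneq (le_lt_trans (Lambda_ge0 G p_gt0 nu) Lnu_lt) => ->.
  by rewrite expr0n mul0r ltxx.
have e_gt0 : 0 < e by rewrite lt_def e_neq0.
exists (fun E => e^-1 * nu E); split.
- by move=> E /nu_ge0; apply: mulr_ge0; rewrite invr_ge0.
- by rewrite ew_scale mulVf.
- rewrite Lambda_scale //.
  have -> : R^-1 = e^-1 ^+ 2 * (e ^+ 2 / R).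
    by rewrite mulrA -exprMn mulVf // expr1n mul1r.
  by rewrite ltr_pM2l // exprn_gt0 // invr_gt0.
Qed.

Lemma unit_janson_weight_convex (K : realType) (T : finType) (p R : K)
    (G : {set {set T}}) (t : K) x y :
  0 < p -> 0 <= t <= 1 ->
  unit_janson_weight p R G x -> unit_janson_weight p R G y ->
  unit_janson_weight p R G (fun E => (1 - t) * x E + t * y E).
Proof.
move=> p_gt0 /andP[t_ge0 t_le1] [x_ge0 x_ew x_Lambda] [y_ge0 y_ew y_Lambda]; split.
- by move=> E GE; rewrite addr_ge0 // mulr_ge0 ?x_ge0 ?y_ge0 ?subr_ge0.
- by rewrite ew_lincomb x_ew y_ew !mulr1 subrK.
- apply: le_lt_trans (Lambda_convex _ p_gt0 _ _ _) _; first by rewrite t_ge0.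
  have -> : R^-1 = (1 - t) * R^-1 + t * R^-1 by ring.
  have [->|t_neq1] := eqVneq t 1; first by rewrite subrr !mul0r !add0r !mul1r.
  apply: ltr_leD; last by rewrite ler_wpM2l // ltW.
  by rewrite ltr_pM2l // subr_gt0 lt_neqAle t_neq1.
Qed.

Section Induced.
Variables (K : realType) (T : finType) (G : {set {set T}}) (W : {set T}).

Definition extend_induced (nu : {set T} -> K) (E : {set T}) : K :=
  if E \subset W then nu E else 0.

Lemma deg_extend_induced nu L :
  deg G (extend_induced nu) L = deg (induced G W) nu L.
Proof.
rewrite /deg /extend_induced -big_mkcondr /=.
by apply: eq_bigl => E; rewrite inE andbAC.
Qed.

Lemma ew_extend_induced nu : ew G (extend_induced nu) = ew (induced G W) nu.
Proof.
have ew_deg0 H x : ew H x = deg H x set0.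
  by apply: eq_bigl => E; rewrite sub0set andbT.
by rewrite !ew_deg0 deg_extend_induced.
Qed.

Lemma unit_janson_weight_extend_induced (p R : K) nu :
  unit_janson_weight p R (induced G W) nu ->
  unit_janson_weight p R G (extend_induced nu).
Proof.
case=> nu_ge0 nu_ew nu_Lambda; split.
- move=> E GE; rewrite /extend_induced; case: ifP => // EW.
  by apply: nu_ge0; rewrite inE GE EW.
- by rewrite ew_extend_induced.
- rewrite /Lambda; under eq_bigr do rewrite deg_extend_induced.
  exact: nu_Lambda.
Qed.

Lemma deg_extend_induced_notin nu v :
  v \notin W -> deg G (extend_induced nu) [set v] = 0.
Proof.
move=> vW; rewrite deg_extend_induced /deg big1 // => E /andP[].
rewrite inE sub1set => /andP[_ /subsetP EW] /EW.
by rewrite (negbTE vW).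
Qed.

End Induced.

Section LowEnergy.
Variables (K : realType) (T : finType) (G : {set {set T}}) (s : nat) (p R beta : K).
Hypotheses (p_gt0 : 0 < p) (R_gt0 : 0 < R) (beta_gt0 : 0 < beta) (uG : uniform s G).
Hypothesis janson_large : forall W : {set T},
  (1 - beta) * #|T|%:R <= #|W|%:R -> janson p R (induced G W).

Let n : K := #|T|%:R.
Let B : K := s%:R ^+ 2 / (beta * n).

Let B_ge0 : 0 <= B.
Proof. by apply: divr_ge0; [exact: sqr_ge0 | apply: mulr_ge0; [exact: ltW | exact: ler0n]]. Qed.

Lemma deg_energy_step : (0 < s)%N -> (0 < #|T|)%N -> forall x,
  unit_janson_weight p R G x -> 2 * B < deg_energy G x ->
  exists2 y, unit_janson_weight p R G y &
    deg_energy G y <= deg_energy G x - B ^+ 2 / s%:R.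
Proof.
move=> s_gt0 T_gt0 x ux q_gt; have [x_ge0 x_ew _] := ux.
have n_gt0 : 0 < n by rewrite ltr0n.
have sK_gt0 : (0 : K) < s%:R by rewrite ltr0n.
set th := s%:R / (beta * n).
have th_gt0 : 0 < th by rewrite divr_gt0 ?mulr_gt0.
pose W := [set v | deg G x [set v] <= th].
have W_large : (1 - beta) * n <= #|W|%:R.
  have := card_le_markov th_gt0 (fun v => deg_ge0 [set v] x_ge0).
  rewrite (sum_deg_set1 _ uG) x_ew mulr1 /th invf_div mulrCA divff ?mulr1 ?gt_eqF ?ltr0n //.
  by rewrite mulrBl mul1r.
have [nu' u_nu'] := janson_unit_weight p_gt0 R_gt0 (janson_large W_large).
set nu := extend_induced W nu'.
have u_nu : unit_janson_weight p R G nu := unit_janson_weight_extend_induced u_nu'.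
have [nu_ge0 nu_ew _] := u_nu.
have cross_le : \sum_v deg G x [set v] * deg G nu [set v] <= B.
  apply: (@le_trans _ _ (\sum_v th * deg G nu [set v])).
    apply: ler_sum => v _; have [vW | vW] := boolP (v \in W).
      by rewrite ler_wpM2r ?deg_ge0 //; move: vW; rewrite inE.
    by rewrite deg_extend_induced_notin // !mulr0.
  by rewrite -mulr_sumr (sum_deg_set1 _ uG) nu_ew mulr1 /B expr2 mulrAC.
set q := deg_energy G x.
have q_le : q <= s%:R by have := deg_energy_le uG x_ge0; rewrite x_ew expr1n mulr1.
set t := q / (2 * s%:R).
have qE : q = 2 * t * s%:R.
  by rewrite /t [2 * _]mulrC -mulrA divfK // mulf_neq0 ?gt_eqF.
have t_01 : 0 <= t <= 1.
  apply/andP; split; first by rewrite divr_ge0 ?deg_energy_ge0 ?mulr_ge0 ?ler0n.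
  by rewrite ler_pdivrMr ?mulr_gt0 //; lra.
exists (fun E => (1 - t) * x E + t * nu E).
  exact: unit_janson_weight_convex.
rewrite deg_energy_lincomb; apply: mix_quadratic_le => //.
by have := deg_energy_le uG nu_ge0; rewrite nu_ew expr1n mulr1.
Qed.

Lemma exists_low_deg_energy x : unit_janson_weight p R G x ->
  exists2 y, unit_janson_weight p R G y & deg_energy G y <= 2 * B.
Proof.
move=> ux; have [x_ge0 _ _] := ux.
have [s0 | s_gt0] := posnP s.
  exists x => //; apply: le_trans (deg_energy_le uG x_ge0) _.
  by rewrite s0 mul0r; apply: mulr_ge0.
have [T0 | T_gt0] := posnP #|T|.
  exists x => //; rewrite /deg_energy big_pred0 => [|v]; first exact: mulr_ge0.
  by have := card0_eq T0 v; rewrite !inE.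
have B_gt0 : 0 < B by rewrite /B /n divr_gt0 ?exprn_gt0 ?mulr_gt0 ?ltr0n.
apply: (archi_descent _ (deg_energy_step s_gt0 T_gt0) ux).
by rewrite divr_gt0 ?exprn_gt0 ?ltr0n.
Qed.

End LowEnergy.

Theorem lemma7p5 (K : realType) (s : nat) (R p beta : K)
  (hR : 0 < R) (hp : 0 < p) (hbeta : 0 < beta)
  (T : finType) (G : {set {set T}}) :
  uniform s G ->
  (forall W : {set T}, (1 - beta) * #|T|%:R <= #|W|%:R ->
      janson p R (induced G W)) ->
  exists mu : {set T} -> K,
    [/\ nonneg_weight G mu,
        ew G mu = Num.sqrt R,
        Lambda p G mu < (ew G mu) ^+ 2 / R &
        \sum_(v : T) (deg G mu [set v]) ^+ 2
          <= 2 * (s%:R) ^+ 2 * (ew G mu) ^+ 2 / (beta * #|T|%:R)].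
Proof.
move=> uG janson_large.
have setT_large : (1 - beta) * #|T|%:R <= #|[set: T]|%:R.
  by rewrite cardsT ler_piMl ?ler0n // lerBlDr lerDl ltW.
have [x ux] := janson_unit_weight hp hR (janson_large _ setT_large).
have [y [y_ge0 y_ew y_Lambda] y_energy] :=
  exists_low_deg_energy hp hR hbeta uG janson_large (unit_janson_weight_extend_induced ux).
have sqrtR2 : Num.sqrt R ^+ 2 = R by rewrite sqr_sqrtr // ltW.
exists (fun E => Num.sqrt R * y E); rewrite ew_scale y_ew mulr1 sqrtR2; split.
- by move=> E GE; rewrite mulr_ge0 ?sqrtr_ge0 ?y_ge0.
- by [].
- by rewrite Lambda_scale // sqrtR2 ltr_pM2l.
- under eq_bigr do rewrite deg_scale exprMn sqrtR2.
  have -> : 2 * s%:R ^+ 2 * R / (beta * #|T|%:R)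
           = R * (2 * (s%:R ^+ 2 / (beta * #|T|%:R))) by ring.
  by rewrite -mulr_sumr ler_pM2l.
Qed.
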